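(* Assume the setting below with $k\ge2$, and suppose $\mathcal{S}$ is pseudo-symmetric. Let $(x_1,y_1)\in L$ be the point with $\varphi(x_1,y_1)=g(\mathcal{S})/2+a$. Then (a) either $y_1=0$ or $(x_1,y_1+1)\notin L$; (b) either $x_1<k$ or $(x_1+k,y_1)\notin L$; (c) either $x_1=0$, or $(x_1+1,y_1)\notin L$, or $x_1\equiv1\pmod k$.
   Context: Setting (AA-semigroups). Let $a,d,k,c$ be positive integers with $\gcd(a,a+d,\ldots,a+kd,c)=1$ and $\gcd(a,d)=1$, and let $\mathcal{S}=\langle a,a+d,\ldots,a+kd,c\rangle$ be the numerical semigroup of non-negative integer combinations of these generators; $g(\mathcal{S})$ is its Frobenius number (largest integer not in $\mathcal{S}$). $\mathcal{S}$ is pseudo-symmetric if $g(\mathcal{S})$ is even and $\mathcal{S}\cup(g(\mathcal{S})-\mathcal{S})=\mathbb{Z}\setminus\{g(\mathcal{S})/2\}$. Put $s_{-1}=a$ and let $s_0$ be the unique integer with $ds_0\equiv c\pmod a$, $0\le s_0<a$. If $s_0=0$ set $m=-1$. Otherwise define $q_{i+1},s_{i+1}$ for $i=0,1,2,\ldots$ by $s_{i-1}=q_{i+1}s_i-s_{i+1}$ with $0\le s_{i+1}<s_i$, and let $m$ be the index with $s_m>0=s_{m+1}$ (so $s_m=\gcd(a,c)$). Define $P_{-1}=0$, $P_0=1$, $P_{i+1}=q_{i+1}P_i-P_{i-1}$ for $i=0,\ldots,m$, and $R_i=\frac1a\big((a+kd)s_i-kcP_i\big)$ for $-1\le i\le m+1$;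 these are integers with $-c/s_m=R_{m+1}<R_m<\cdots<R_0<R_{-1}=a+kd$. Let $v$ be the unique integer with $R_{v+1}\le0<R_v$. Let $L=A\cup B$, where $A=\{(x,y)\in\mathbb{Z}^2:0\le x\le s_v-1,\ 0\le y\le P_{v+1}-P_v-1\}$ and $B=\{(x,y)\in\mathbb{Z}^2:0\le x\le s_v-s_{v+1}-1,\ P_{v+1}-P_v\le y\le P_{v+1}-1\}$. Define $\varphi:\mathbb{Z}^2\to\mathbb{Z}$, $\varphi(x,y)=\lceil x/k\rceil a+xd+yc$. It is known (Rødseth) that $|L|=a$ and $\varphi$ maps $L$ bijectively onto $\mathrm{Ap}(\mathcal{S};a)=\{s\in\mathcal{S}:s-a\notin\mathcal{S}\}$; consequently $g(\mathcal{S})+a=\max\varphi(L)$ is attained at $(s_v-s_{v+1}-1,P_{v+1}-1)$ or at $(s_v-1,P_{v+1}-P_v-1)$. *)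

From Stdlib Require Import ZArith Lia List.
Open Scope Z_scope.

Definition gens_AP (a d : Z) (k : nat) : list Z :=
  map (fun i => a + Z.of_nat i * d) (seq 0 (S k)).

Definition gcd_gens (a d k c : Z) : Z :=
  fold_right Z.gcd c (gens_AP a d (Z.to_nat k)).

Fixpoint lincomb_AP (a d : Z) (f : nat -> Z) (n : nat) : Z :=
  match n with
  | O => f O * a
  | S n' => lincomb_AP a d f n' + f n * (a + Z.of_nat n * d)
  end.

Definition inS (a d k c : Z) (n : Z) : Prop :=
  exists (f : nat -> Z) (y : Z),
    (forall i, 0 <= f i) /\ 0 <= y /\
    n = lincomb_AP a d f (Z.to_nat k) + y * c.

Definition is_frobenius (a d k c g : Z) : Prop :=
  ~ inS a d k c g /\ forall n, g < n -> inS a d k c n.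

Definition pseudo_symmetric (a d k c g : Z) : Prop :=
  Z.Even g /\
  forall z : Z, (inS a d k c z \/ inS a d k c (g - z)) <-> z <> g / 2.

(* These conditions determine s on
   [-1, m+1], q on [1, m+1] and m uniquely. *)
Definition s_q_m_spec (a d c : Z) (s q : Z -> Z) (m : Z) : Prop :=
  s (-1) = a /\
  0 <= s 0 < a /\ (a | d * s 0 - c) /\
  -1 <= m /\
  (forall i, 0 <= i <= m ->
     s (i - 1) = q (i + 1) * s i - s (i + 1) /\ 0 <= s (i + 1) < s i) /\
  s (m + 1) = 0.

Definition P_spec (q P : Z -> Z) (m : Z) : Prop :=
  P (-1) = 0 /\ P 0 = 1 /\
  (forall i, 0 <= i <= m -> P (i + 1) = q (i + 1) * P i - P (i - 1)).

(* R_i = ((a + k d) s_i - k c P_i) / a  (an exact division). *)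
Definition R (a d k c : Z) (s P : Z -> Z) (i : Z) : Z :=
  ((a + k * d) * s i - k * c * P i) / a.

Definition v_spec (a d k c : Z) (s P : Z -> Z) (m v : Z) : Prop :=
  -1 <= v <= m /\ R a d k c s P (v + 1) <= 0 /\ 0 < R a d k c s P v.

Definition inL (s P : Z -> Z) (v : Z) (x y : Z) : Prop :=
  (0 <= x <= s v - 1 /\ 0 <= y <= P (v + 1) - P v - 1) \/
  (0 <= x <= s v - s (v + 1) - 1 /\ P (v + 1) - P v <= y <= P (v + 1) - 1).

Definition ceil_div (x k : Z) : Z := - ((- x) / k).

Definition phi (a d k c : Z) (x y : Z) : Z :=
  ceil_div x k * a + x * d + y * c.

From Stdlib Require Import ZArith Lia.
Open Scope Z_scope.

(* For (x0, y0) in L, phi(x0, y0) - a lies outside S.  Indeed, grouping the generators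
   a + j d of a representation n = t a + x d + y c (j <= k) gives x <= k t, hence
   phi(x, y) <= n.  Three moves, each preserving x d + y c mod a, never increasing phi and
   decreasing the weight (P_{v+1} + P_v) x + (s_v + s_{v+1}) y by at least a, bring (x, y)
   into L; there residue classes mod a are represented at most once (a = s_v P_{v+1} -
   s_{v+1} P_v), so we land on (x0, y0) with phi(x0, y0) <= n, a contradiction.
   Now h = g/2 = phi(x1, y1) - a is not in S, and pseudo-symmetry gives h + e in S for every
   nonzero e in S (otherwise h - e in S and h in S), as well as h + d in S or h - d in S.
   Each forbidden neighbour of (x1, y1) in L would have phi - a equal to h + c, h + a + k d,
   h + a + d, or (together with (x1 - 1, y1)) h + d and h - d. *)

Lemma ceil_div_spec x k : 0 < k -> k * ceil_div x k - k < x <= k * ceil_div x k.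
Proof.
  intros Hk; unfold ceil_div.
  pose proof (Z.div_mod (- x) k ltac:(lia)).
  pose proof (Z.mod_pos_bound (- x) k Hk).
  lia.
Qed.

Lemma ceil_div_unique x k u : 0 < k -> k * u - k < x <= k * u -> ceil_div x k = u.
Proof. intros Hk Hu; pose proof (ceil_div_spec x k Hk); nia. Qed.

Lemma ceil_div_le x k u : 0 < k -> x <= k * u -> ceil_div x k <= u.
Proof. intros Hk Hu; pose proof (ceil_div_spec x k Hk); nia. Qed.

Lemma ceil_div_add_k x k : 0 < k -> ceil_div (x + k) k = ceil_div x k + 1.
Proof. intros Hk; pose proof (ceil_div_spec x k Hk); apply ceil_div_unique; lia. Qed.

Lemma ceil_div_succ_mod0 x k : 0 < k -> x mod k = 0 -> ceil_div (x + 1) k = ceil_div x k + 1.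
Proof.
  intros Hk Hx; pose proof (Z.div_mod x k ltac:(lia)) as Ex.
  rewrite (ceil_div_unique x k (x / k)) by lia.
  apply ceil_div_unique; lia.
Qed.

Lemma ceil_div_succ x k : 0 < k -> x mod k <> 0 -> ceil_div (x + 1) k = ceil_div x k.
Proof.
  intros Hk Hx; pose proof (ceil_div_spec x k Hk).
  apply ceil_div_unique; [exact Hk|].
  enough (x <> k * ceil_div x k) by lia.
  intros Ex; apply Hx; rewrite Ex, Z.mul_comm; apply Z.mod_mul; lia.
Qed.

Lemma phi_le_shift a d k c x y x' y' u : 0 < a -> 0 < k -> x' - x <= k * u ->
  phi a d k c x' y' <= phi a d k c x y + u * a + (x' - x) * d + (y' - y) * c.
Proof.
  intros Ha Hk Hu; unfold phi.
  pose proof (ceil_div_spec x k Hk).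
  assert (ceil_div x' k <= ceil_div x k + u) by (apply ceil_div_le; lia).
  nia.
Qed.

Lemma phi_succ_y a d k c x y : phi a d k c x (y + 1) = phi a d k c x y + c.
Proof. unfold phi; ring. Qed.

Lemma phi_add_k a d k c x y : 0 < k -> phi a d k c (x + k) y = phi a d k c x y + (a + k * d).
Proof. intros Hk; unfold phi; rewrite ceil_div_add_k by exact Hk; ring. Qed.

Lemma phi_succ_x_mod0 a d k c x y : 0 < k -> x mod k = 0 ->
  phi a d k c (x + 1) y = phi a d k c x y + (a + d).
Proof. intros Hk Hx; unfold phi; rewrite ceil_div_succ_mod0 by assumption; ring. Qed.

Lemma phi_succ_x a d k c x y : 0 < k -> x mod k <> 0 ->
  phi a d k c (x + 1) y = phi a d k c x y + d.
Proof. intros Hk Hx; unfold phi; rewrite ceil_div_succ by assumption; ring. Qed.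

Lemma phi_pred_x a d k c x y : 0 < k -> x mod k <> 1 mod k ->
  phi a d k c (x - 1) y = phi a d k c x y - d.
Proof.
  intros Hk Hx.
  rewrite <- (Z.sub_add 1 x) at 2.
  rewrite phi_succ_x; [ring | exact Hk |].
  intros H0; apply Hx.
  rewrite <- (Z.sub_add 1 x), <- Z.add_mod_idemp_l, H0 by lia; reflexivity.
Qed.

Lemma lincomb_AP_decomp a d f n : (forall i, 0 <= f i) ->
  exists t x, lincomb_AP a d f n = t * a + x * d /\ 0 <= t /\ 0 <= x <= Z.of_nat n * t.
Proof.
  intros Hf; induction n as [|n IH]; cbn [lincomb_AP].
  - exists (f 0%nat), 0; pose proof (Hf 0%nat); split; [ring | lia].
  - destruct IH as [t [x [E [Ht Hx]]]]; rewrite E.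
    exists (t + f (S n)), (x + Z.of_nat (S n) * f (S n)).
    pose proof (Hf (S n)); rewrite Nat2Z.inj_succ in *.
    split; [ring | nia].
Qed.

Lemma lincomb_AP_incr a d f j n :
  lincomb_AP a d (fun i => f i + (if Nat.eqb i j then 1 else 0)) n =
  lincomb_AP a d f n + (if Nat.leb j n then a + Z.of_nat j * d else 0).
Proof.
  induction n as [|n IH]; cbn [lincomb_AP].
  - destruct (Nat.eqb_spec 0 j), (Nat.leb_spec j 0); try lia; subst; cbn; ring.
  - rewrite IH.
    destruct (Nat.eqb_spec (S n) j), (Nat.leb_spec j n), (Nat.leb_spec j (S n));
      try lia; subst; ring.
Qed.

Lemma inS_add_gen a d k c z j : (j <= Z.to_nat k)%nat ->
  inS a d k c z -> inS a d k c (z + (a + Z.of_nat j * d)).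
Proof.
  intros Hj [f [y [Hf [Hy E]]]].
  exists (fun i => f i + (if Nat.eqb i j then 1 else 0)), y.
  split; [intros i; specialize (Hf i); destruct (Nat.eqb i j); lia |].
  rewrite lincomb_AP_incr.
  destruct (Nat.leb_spec j (Z.to_nat k)); lia.
Qed.

Lemma inS_add_c a d k c z : inS a d k c z -> inS a d k c (z + c).
Proof. intros [f [y [Hf [Hy E]]]]; exists f, (y + 1); split; [exact Hf | lia]. Qed.

Section PseudoSymmetric.
Variables a d k c g : Z.
Hypothesis Hps : pseudo_symmetric a d k c g.

Lemma pseudo_symmetric_half_notin : ~ inS a d k c (g / 2).
Proof. destruct Hps as [_ H]; intros Hh; now apply (proj1 (H (g / 2)) (or_introl Hh)). Qed.

Lemma pseudo_symmetric_half_pm e : e <> 0 ->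
  inS a d k c (g / 2 + e) \/ inS a d k c (g / 2 - e).
Proof.
  destruct Hps as [[h ->] H]; intros He.
  rewrite Z.mul_comm, Z.div_mul by lia.
  destruct (proj2 (H (h + e)) ltac:(rewrite Z.mul_comm, Z.div_mul; lia)) as [Hin|Hin].
  - now left.
  - right; now replace (h - e) with (2 * h - (h + e)) by ring.
Qed.

Lemma pseudo_symmetric_half_add e : e <> 0 ->
  (forall z, inS a d k c z -> inS a d k c (z + e)) -> inS a d k c (g / 2 + e).
Proof.
  intros He Hadd.
  destruct (pseudo_symmetric_half_pm e He) as [Hin|Hin]; [exact Hin|].
  exfalso; apply pseudo_symmetric_half_notin.
  now replace (g / 2) with (g / 2 - e + e) by ring; apply Hadd.
Qed.

End PseudoSymmetric.

(* [inL s P v] is [staircase (s v) (s (v + 1)) (P v) (P (v + 1))] by conversion. *)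
Definition staircase (sv sw Pv Pw x y : Z) : Prop :=
  (0 <= x <= sv - 1 /\ 0 <= y <= Pw - Pv - 1) \/
  (0 <= x <= sv - sw - 1 /\ Pw - Pv <= y <= Pw - 1).

Lemma staircase_pred_x sv sw Pv Pw x y :
  staircase sv sw Pv Pw x y -> 0 < x -> staircase sv sw Pv Pw (x - 1) y.
Proof. unfold staircase; lia. Qed.

Section Staircase.
Variables a d k c sv sw Pv Pw Nv Nw : Z.
Hypotheses (Ha : 0 < a) (Hd : 0 < d) (Hc : 0 < c) (Hk : 0 < k) (Had : Z.gcd a d = 1).
Hypotheses (Hs : 0 <= sw < sv) (HP : 0 <= Pv < Pw) (Hdet : sv * Pw - sw * Pv = a).
Hypotheses (HNv : c * Pv - d * sv = Nv * a) (HNw : c * Pw - d * sw = Nw * a).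
(* By [R_eq] below, these are R_v > 0 and R_{v+1} <= 0. *)
Hypotheses (HRv : k * Nv < sv) (HRw : sw <= k * Nw).

Let weight x y := (Pw + Pv) * x + (sv + sw) * y.

Lemma staircase_or_step x y : 0 <= x -> 0 <= y ->
  staircase sv sw Pv Pw x y \/
  exists x' y', 0 <= x' /\ 0 <= y' /\ weight x' y' + a <= weight x y /\
    phi a d k c x' y' <= phi a d k c x y /\ (a | (x' - x) * d + (y' - y) * c).
Proof.
  intros Hx Hy; unfold staircase, weight.
  destruct (Z_lt_le_dec y Pw); [destruct (Z_lt_le_dec x sv)|].
  - destruct (Z_lt_le_dec y (Pw - Pv)); [left; left; lia|].
    destruct (Z_lt_le_dec x (sv - sw)); [left; right; lia|].
    right; exists (x - (sv - sw)), (y - (Pw - Pv)).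
    pose proof (phi_le_shift a d k c x y (x - (sv - sw)) (y - (Pw - Pv)) 0 Ha Hk ltac:(lia)).
    assert (0 <= (sv - sw) * d) by nia; assert (0 <= (Pw - Pv) * c) by nia.
    repeat split; [lia | lia | nia | nia | exists (Nv - Nw); nia].
  - right; exists (x - sv), (y + Pv).
    pose proof (phi_le_shift a d k c x y (x - sv) (y + Pv) (- Nv) Ha Hk ltac:(lia)).
    repeat split; [lia | lia | nia | nia | exists Nv; nia].
  - right; exists (x + sw), (y - Pw).
    pose proof (phi_le_shift a d k c x y (x + sw) (y - Pw) Nw Ha Hk ltac:(lia)).
    repeat split; [lia | lia | nia | nia | exists (- Nw); nia].
Qed.

Lemma staircase_descent x y : 0 <= x -> 0 <= y ->
  exists x' y', staircase sv sw Pv Pw x' y' /\ phi a d k c x' y' <= phi a d k c x y /\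
    (a | (x' - x) * d + (y' - y) * c).
Proof.
  intros Hx Hy.
  assert (Hw : 0 <= weight x y) by (unfold weight; nia).
  remember (weight x y) as w eqn:Ew; revert x y Hx Hy Ew.
  pattern w; apply Z_lt_induction; [clear w Hw; intros w IH x y Hx Hy Ew | exact Hw].
  destruct (staircase_or_step x y Hx Hy) as [HL | [x2 [y2 [Hx2 [Hy2 [Hw2 [Hphi2 Hdiv2]]]]]]].
  - exists x, y; split; [exact HL|]; split; [lia | exists 0; ring].
  - assert (0 <= weight x2 y2) by (unfold weight; nia).
    destruct (IH (weight x2 y2) ltac:(lia) x2 y2 Hx2 Hy2 eq_refl)
      as [x' [y' [HL [Hphi Hdiv]]]].
    exists x', y'; split; [exact HL|]; split; [lia|].
    replace ((x' - x) * d + (y' - y) * c)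
      with (((x' - x2) * d + (y' - y2) * c) + ((x2 - x) * d + (y2 - y) * c)) by ring.
    now apply Z.divide_add_r.
Qed.

Lemma lattice_coords dx dy : (a | dx * d + dy * c) ->
  exists m n, dx = m * sv - n * sw /\ dy = n * Pw - m * Pv.
Proof.
  intros [K HK].
  assert (Hm : (a | dx * Pw + dy * sw)).
  { apply Z.gauss with d; [exists (Pw * K - dy * Nw) | exact Had].
    transitivity (Pw * (dx * d + dy * c) - dy * (c * Pw - d * sw)); [ring|].
    rewrite HK, HNw; ring. }
  assert (Hn : (a | dx * Pv + dy * sv)).
  { apply Z.gauss with d; [exists (Pv * K - dy * Nv) | exact Had].
    transitivity (Pv * (dx * d + dy * c) - dy * (c * Pv - d * sv)); [ring|].
    rewrite HK, HNv; ring. }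
  destruct Hm as [m Hm], Hn as [n Hn]; exists m, n.
  split; apply (Z.mul_reg_r _ _ a); try lia.
  - transitivity (dx * (sv * Pw - sw * Pv)); [rewrite Hdet; ring|].
    transitivity ((m * a) * sv - (n * a) * sw); [rewrite <- Hm, <- Hn; ring | ring].
  - transitivity (dy * (sv * Pw - sw * Pv)); [rewrite Hdet; ring|].
    transitivity ((n * a) * Pw - (m * a) * Pv); [rewrite <- Hm, <- Hn; ring | ring].
Qed.

Lemma staircase_shift_nonneg x y m n : staircase sv sw Pv Pw x y ->
  0 <= x + m * sv - n * sw -> 0 <= y - m * Pv + n * Pw -> 0 <= m /\ 0 <= n.
Proof.
  intros HL Hx Hy.
  assert (0 <= x <= sv - 1 /\ 0 <= y <= Pw - 1 /\
    (x <= sv - sw - 1 \/ y <= Pw - Pv - 1)) by (unfold staircase in HL; lia).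
  destruct (Z_lt_le_dec m 0), (Z_lt_le_dec n 0); try lia.
  - destruct (Z.lt_trichotomy m n) as [|[<-|]].
    + assert (n * (sv - sw) <= 0) by nia; assert ((m - n) * sv <= - sv) by nia; lia.
    + assert (m * (sv - sw) <= - (sv - sw)) by nia.
      assert (m * (Pw - Pv) <= - (Pw - Pv)) by nia; lia.
    + assert (m * (Pw - Pv) <= 0) by nia; assert ((n - m) * Pw <= - Pw) by nia; lia.
  - assert (m * sv <= - sv) by nia; assert (0 <= n * sw) by nia; lia.
  - assert (0 <= m * Pv) by nia; assert (n * Pw <= - Pw) by nia; lia.
Qed.

Lemma staircase_congr_unique x y x' y' :
  staircase sv sw Pv Pw x y -> staircase sv sw Pv Pw x' y' ->
  (a | (x - x') * d + (y - y') * c) -> x = x' /\ y = y'.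
Proof.
  intros HL HL' Hdiv.
  destruct (lattice_coords _ _ Hdiv) as [m [n [Ex Ey]]].
  assert (0 <= x /\ 0 <= y) by (unfold staircase in HL; lia).
  assert (0 <= x' /\ 0 <= y') by (unfold staircase in HL'; lia).
  destruct (staircase_shift_nonneg x' y' m n HL' ltac:(lia) ltac:(lia)).
  destruct (staircase_shift_nonneg x y (- m) (- n) HL ltac:(lia) ltac:(lia)).
  assert (m = 0) by lia; assert (n = 0) by lia; subst; lia.
Qed.

Lemma staircase_apery x0 y0 :
  staircase sv sw Pv Pw x0 y0 -> ~ inS a d k c (phi a d k c x0 y0 - a).
Proof.
  intros HL0 [f [y [Hf [Hy Ez]]]].
  destruct (lincomb_AP_decomp a d f (Z.to_nat k) Hf) as [t [x [Et [Ht Hx]]]].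
  rewrite Z2Nat.id in Hx by lia.
  assert (Hphi : phi a d k c x y <= t * a + x * d + y * c).
  { unfold phi; assert (ceil_div x k <= t) by (apply ceil_div_le; lia); nia. }
  destruct (staircase_descent x y ltac:(lia) Hy) as [x' [y' [HL [Hphi' [K HK]]]]].
  assert (Hdiv : (a | (x' - x0) * d + (y' - y0) * c)).
  { exists (K + (ceil_div x0 k - 1 - t)); unfold phi in Ez; nia. }
  destruct (staircase_congr_unique x' y' x0 y0 HL HL0 Hdiv); subst; lia.
Qed.

End Staircase.

Lemma continuant_facts a d c s q P m : 0 < a ->
  s_q_m_spec a d c s q m -> P_spec q P m ->
  forall i, 0 <= i -> i <= m + 1 ->
    (a | c * P (i - 1) - d * s (i - 1)) /\ (a | c * P i - d * s i) /\
    s (i - 1) * P i - s i * P (i - 1) = a /\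
    0 <= P (i - 1) < P i /\ 0 <= s i < s (i - 1).
Proof.
  intros Ha [Hs1 [Hs0 [[K0 HK0] [_ [Hrec _]]]]] [HP1 [HP0 HPrec]].
  refine (natlike_ind _ _ _).
  - cbn; rewrite Hs1, HP1, HP0; intros _.
    split; [exists (- d); ring|]; split; [exists (- K0); lia|]; lia.
  - intros i Hi IH Hi1; unfold Z.succ in *.
    destruct (IH ltac:(lia)) as [[K1 HK1] [[K2 HK2] [Hdet [HPi Hsi]]]].
    replace (i + 1 - 1) with i by ring.
    destruct (Hrec i ltac:(lia)) as [Es Hs].
    pose proof (HPrec i ltac:(lia)) as EP.
    set (Q := q (i + 1)) in *.
    assert (Es' : s (i + 1) = Q * s i - s (i - 1)) by lia.
    assert (HQ : 2 <= Q) by nia.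
    split; [exists K2; exact HK2|].
    split; [exists (Q * K2 - K1); rewrite Es', EP; nia|].
    split; [rewrite Es', EP; nia|].
    split; [nia | lia].
Qed.

Lemma R_eq a d k c s P i N : 0 < a -> c * P i - d * s i = N * a ->
  R a d k c s P i = s i - k * N.
Proof.
  intros Ha HN; unfold R.
  replace ((a + k * d) * s i - k * c * P i) with (a * s i - k * (c * P i - d * s i)) by ring.
  rewrite HN; replace (a * s i - k * (N * a)) with ((s i - k * N) * a) by ring.
  apply Z.div_mul; lia.
Qed.

Theorem lemma5 (a d k c : Z) (s q P : Z -> Z) (m v g x1 y1 : Z) :
  0 < a -> 0 < d -> 0 < c -> 2 <= k ->
  gcd_gens a d k c = 1 -> Z.gcd a d = 1 ->
  s_q_m_spec a d c s q m ->
  P_spec q P m ->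
  v_spec a d k c s P m v ->
  is_frobenius a d k c g ->
  pseudo_symmetric a d k c g ->
  inL s P v x1 y1 ->
  phi a d k c x1 y1 = g / 2 + a ->
  (y1 = 0 \/ ~ inL s P v x1 (y1 + 1)) /\
  (x1 < k \/ ~ inL s P v (x1 + k) y1) /\
  (x1 = 0 \/ ~ inL s P v (x1 + 1) y1 \/ x1 mod k = 1 mod k).
Proof.
  intros Ha Hd Hc Hk _ Had Hsq HPq [Hv [HRw HRv]] _ Hps HL Hphi.
  destruct (continuant_facts a d c s q P m Ha Hsq HPq (v + 1) ltac:(lia) ltac:(lia))
    as [[Nv HNv] [[Nw HNw] [Hdet [HP Hs]]]].
  replace (v + 1 - 1) with v in * by ring.
  rewrite (R_eq _ _ _ _ _ _ _ _ Ha HNv) in HRv.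
  rewrite (R_eq _ _ _ _ _ _ _ _ Ha HNw) in HRw.
  assert (Apery : forall x y, inL s P v x y -> ~ inS a d k c (phi a d k c x y - a)).
  { intros x y; apply (staircase_apery a d k c _ _ _ _ Nv Nw); lia. }
  pose proof (pseudo_symmetric_half_add _ _ _ _ _ Hps) as Hadd.
  split; [|split].
  - right; intros HL'; apply (Apery _ _ HL').
    rewrite phi_succ_y, Hphi; replace (g / 2 + a + c - a) with (g / 2 + c) by ring.
    apply Hadd; [lia | apply inS_add_c].
  - right; intros HL'; apply (Apery _ _ HL').
    rewrite phi_add_k, Hphi by lia.
    replace (g / 2 + a + (a + k * d) - a) with (g / 2 + (a + Z.of_nat (Z.to_nat k) * d))
      by (rewrite Z2Nat.id; lia).
    apply Hadd; [nia | intros z; apply inS_add_gen; lia].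
  - destruct (Z.eq_dec x1 0) as [|Hx1]; [now left | right].
    destruct (Z.eq_dec (x1 mod k) 0) as [H0|H0];
      [|destruct (Z.eq_dec (x1 mod k) (1 mod k)) as [H1|H1]; [now right|]];
      left; intros HL'; apply (Apery _ _ HL').
    + rewrite phi_succ_x_mod0, Hphi by lia.
      replace (g / 2 + a + (a + d) - a) with (g / 2 + (a + Z.of_nat 1 * d)) by lia.
      apply Hadd; [lia | intros z; apply inS_add_gen; lia].
    + rewrite phi_succ_x, Hphi by lia.
      destruct (pseudo_symmetric_half_pm _ _ _ _ _ Hps d ltac:(lia)) as [Hin|Hin].
      * now replace (g / 2 + a + d - a) with (g / 2 + d) by ring.
      * exfalso; apply (Apery (x1 - 1) y1); [apply staircase_pred_x; [exact HL | unfold inL in HL; lia]|].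
        rewrite phi_pred_x, Hphi by lia.
        now replace (g / 2 + a - d - a) with (g / 2 - d) by ring.
Qed.
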